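(* For every integer $n\geq 3$ there exists a strongly $2$-connected $(n-1)$-regular digraph on $2n$ vertices with no Hamilton cycle. For every integer $n\geq 3$ there exists a strongly $2$-connected $(n-1)$-regular oriented graph on $4n+2$ vertices with no Hamilton cycle.
   Context: A digraph has no loops and at most one edge in each direction between two vertices; an oriented graph has at most one edge between any two vertices. A digraph is $d$-regular if every vertex has in- and outdegree exactly $d$. Strongly 2-connected means the digraph has at least three vertices and remains strongly connected after deleting any single vertex. A Hamilton cycle is a directed cycle through all vertices. *)

From mathcomp Require Import all_boot.
Set Implicit Arguments. Unset Strict Implicit. Unset Printing Implicit Defensive.

(* A digraph on the finite vertex type T is an irreflexive relation e : rel T
   (e x y means there is an edge x -> y). Being a relation, it has at most one
   edge in each direction between two vertices. *)
Definition loopless (T : finType) (e : rel T) : Prop := forall x, ~~ e x x.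

Definition oriented (T : finType) (e : rel T) : Prop :=
  loopless e /\ forall x y, e x y -> ~~ e y x.

Definition regular (T : finType) (e : rel T) (d : nat) : Prop :=
  forall x, #|[set y | e x y]| = d /\ #|[set y | e y x]| = d.

Definition strongly_2_connected (T : finType) (e : rel T) : Prop :=
  2 < #|T| /\
  forall v x y, x != v -> y != v ->
    connect [rel a b | [&& e a b, a != v & b != v]] x y.

Definition hamiltonian (T : finType) (e : rel T) : Prop :=
  exists s : seq T, [/\ uniq s, size s = #|T| & cycle e s].

From mathcomp Require Import all_boot fingroup perm zify.
Set Implicit Arguments. Unset Strict Implicit. Unset Printing Implicit Defensive.

(* Let H be a digraph with two ports p, q whose in- and outdegrees are k - 1,
   all other semidegrees being k.  Gluing two copies of H along the 4-cycle
   (0,p) -> (1,p) -> (0,q) -> (1,q) -> (0,p) gives a k-regular digraph.  A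
   Hamilton cycle has to cross between the copies along this 4-cycle, and
   following its successor map shows that it would be the 4-cycle itself.  The
   glued digraph is strongly 2-connected as soon as H is strongly connected and,
   after deleting any vertex, every other vertex reaches and is reached from a
   surviving port.  For digraphs H is the complete digraph minus the 2-cycle pq.
   For oriented graphs H is the circulant on Z_(2n+1) with arcs i -> i+1..i+n-1
   with three arcs moved; for n >= 5 it remains strongly connected after deleting
   a vertex because an oriented graph on s vertices has at most s(s-1)/2 arcs,
   which is too few for a set closed under out- or in-arcs, and for n = 3, 4 the
   port conditions are checked by computation. *)

Definition avoid (T : finType) (e : rel T) (w : T) : rel T :=
  [rel a b | [&& e a b, a != w & b != w]].

Lemma homo_connect (T T' : finType) (f : T -> T') (e : rel T) (e' : rel T') :
  {homo f : x y / e x y >-> e' x y} -> {homo f : x y / connect e x y >-> connect e' x y}.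
Proof.
move=> fe x y /connectP [s es ->]; apply/connectP.
by exists (map f s); [exact: homo_path fe es | rewrite last_map].
Qed.

Lemma ord_bijection (T : finType) N : #|T| = N -> exists f : 'I_N -> T, bijective f.
Proof. by move=> <-; exists enum_val; exact: (Bijective enum_valK enum_rankK). Qed.

Section Relabel.
Variables (T T' : finType) (f : T' -> T) (e : rel T).
Hypothesis f_bij : bijective f.

Lemma loopless_relpre : loopless e -> loopless (relpre f e).
Proof. by move=> el x; apply: el. Qed.

Lemma oriented_relpre : oriented e -> oriented (relpre f e).
Proof. by case=> el eo; split=> [x | x y]; [apply: el | apply: eo]. Qed.

Lemma regular_relpre d : regular e d -> regular (relpre f e) d.
Proof.
have card_pre P : #|[set y | P (f y)]| = #|[set t | P t]|.
  by rewrite -(on_card_preimset (onW_bij _ f_bij)); apply: eq_card => y; rewrite !inE.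
move=> er x; case: (er (f x)) => eout ein; split.
  by apply: etrans eout; apply: (card_pre (e (f x))).
by apply: etrans ein; apply: (card_pre (e^~ (f x))).
Qed.

Lemma strongly_2_connected_relpre :
  strongly_2_connected e -> strongly_2_connected (relpre f e).
Proof.
case: f_bij => g fK gK [e3 e2c]; split; first by rewrite (bij_eq_card f_bij).
move=> v x y xv yv; rewrite -(fK x) -(fK y).
apply: (homo_connect (f := g) (e := avoid e (f v))); last first.
  by apply: e2c; rewrite (inj_eq (can_inj fK)).
move=> a b /and3P [eab av bv] /=; rewrite !gK eab.
by rewrite !(can2_eq gK fK) av bv.
Qed.

Lemma hamiltonian_relpre : hamiltonian (relpre f e) -> hamiltonian e.
Proof.
case=> s [us ss cs]; exists (map f s); split.
- by rewrite (map_inj_uniq (bij_inj f_bij)).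
- by rewrite size_map ss (bij_eq_card f_bij).
- by rewrite cycle_map.
Qed.
End Relabel.

Lemma hamiltonian_successor (T : finType) (e : rel T) :
  hamiltonian e -> exists sig : T -> T,
    (forall t, e t (sig t)) /\ (forall t0 t, fconnect sig t0 t).
Proof.
case=> s [us ss cs].
have sT t : t \in s.
  have /subset_cardP sTeq : #|s| = #|T| by rewrite (card_uniqP us).
  by rewrite (sTeq (subset_predT _)).
exists (next s); split=> [t | t0 t]; first exact: next_cycle.
by rewrite (fconnect_cycle (cycle_next us) (sT t0)).
Qed.

Section HamiltonCut.
Variables (T : finType) (e : rel T) (sig : T -> T).
Hypotheses (sig_arc : forall t, e t (sig t)) (sig_cyclic : forall t0 t, fconnect sig t0 t).

Lemma cyclic_closed (X : {set T}) t0 t : t0 \in X -> {homo sig : u / u \in X} -> t \in X.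
Proof.
move=> t0X sigX; move: (sig_cyclic t0 t); rewrite fconnect_orbit => /trajectP [i _ ->].
exact: iter_in.
Qed.

Variable A : {set T}.

Section Entry.
Variables x y a1 a2 : T.
Hypotheses (xA : x \notin A) (yA : y \notin A) (a1A : a1 \in A) (a2A : a2 \in A).
Hypotheses (xy : x != y) (a12 : a1 != a2).
Hypothesis e_leave : forall a b, a \in A -> b \notin A -> e a b ->
  (a == a1) && (b == y) || (a == a2) && (b == x).
Hypothesis e_enter : forall a b, a \notin A -> b \in A -> e a b ->
  (a == x) && (b == a1) || (a == y) && (b == a2).

(* Otherwise [x |: A] is closed under [sig], the other arc leaving [A] going to [x]. *)
Lemma cut_entry_exit : sig x = a1 -> sig a1 = y.
Proof.
move=> sx; apply/eqP; apply: contraT => sa1.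
suff : y \in x |: A by rewrite !inE (negbTE yA) orbF eq_sym (negbTE xy).
apply: (cyclic_closed (t0 := x)) => [|t]; first exact: setU11.
rewrite !inE => /predU1P [-> | tA]; first by rewrite sx a1A orbT.
case sA: (sig t \in A); first by rewrite orbT.
case/orP: (e_leave tA (negbT sA) (sig_arc t)) => /andP [/eqP ta /eqP st].
  by move: sa1; rewrite -ta st eqxx.
by rewrite st eqxx.
Qed.

(* Otherwise [~: (A :\ a1)] is closed under [sig], as [sig a1 = y] and the
   other arc entering [A] starts at [y]. *)
Lemma cut_entry_return : sig x = a1 -> sig y = a2.
Proof.
move=> sx; have sa1 := cut_entry_exit sx; apply/eqP; apply: contraT => sy.
suff : a2 \in ~: (A :\ a1) by rewrite !inE eq_sym (negbTE a12) a2A.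
apply: (cyclic_closed (t0 := x)) => [|t]; first by rewrite !inE (negbTE xA) andbF.
rewrite !inE negb_and negbK => /orP [/eqP -> | tA].
  by rewrite sa1 (negbTE yA) andbF.
case sA: (sig t \in A); last by rewrite andbF.
case/orP: (e_enter tA sA (sig_arc t)) => /andP [/eqP tv /eqP st].
  by rewrite st eqxx.
by move: sy; rewrite -tv st eqxx.
Qed.
End Entry.

Variables x y a1 a2 z : T.
Hypotheses (xA : x \notin A) (yA : y \notin A) (a1A : a1 \in A) (a2A : a2 \in A).
Hypotheses (xy : x != y) (a12 : a1 != a2) (zD : z \notin [set x; a1; y; a2]).
Hypothesis e_leave : forall a b, a \in A -> b \notin A -> e a b ->
  (a == a1) && (b == y) || (a == a2) && (b == x).
Hypothesis e_enter : forall a b, a \notin A -> b \in A -> e a b ->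
  (a == x) && (b == a1) || (a == y) && (b == a2).

Lemma cyclic_four_cycle_cut : False.
Proof.
have e_leave' a b : a \in A -> b \notin A -> e a b ->
    (a == a2) && (b == x) || (a == a1) && (b == y).
  by move=> aA bA eab; rewrite orbC; apply: e_leave.
have e_enter' a b : a \notin A -> b \in A -> e a b ->
    (a == y) && (b == a2) || (a == x) && (b == a1).
  by move=> aA bA eab; rewrite orbC; apply: e_enter.
have yx : y != x by rewrite eq_sym.
have a21 : a2 != a1 by rewrite eq_sym.
have four_cycle : sig x = a1 -> False.
  move=> sx; have sa1 := cut_entry_exit yA a1A xy e_leave sx.
  have sy := cut_entry_return xA yA a1A a2A xy a12 e_leave e_enter sx.
  have sa2 := cut_entry_exit xA a2A yx e_leave' sy.
  suff : z \in [set x; a1; y; a2] by rewrite (negbTE zD).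
  apply: (cyclic_closed (t0 := x)) => [|t]; first by rewrite !inE eqxx.
  by rewrite !inE -!orbA => /or4P [] /eqP ->; rewrite ?sx ?sa1 ?sy ?sa2 eqxx ?orbT.
have [/four_cycle // | sx] := eqVneq (sig x) a1.
have [sy | sy] := eqVneq (sig y) a2.
  exact/four_cycle/(cut_entry_return yA xA a2A a1A yx a21 e_leave' e_enter' sy).
suff : a1 \in ~: A by rewrite inE a1A.
apply: (cyclic_closed (t0 := x)) => [|t]; first by rewrite inE.
rewrite !inE => tA; apply/negP => sA.
by case/orP: (e_enter tA sA (sig_arc t)) => /andP [/eqP -> /eqP st];
  [move: sx | move: sy]; rewrite st eqxx.
Qed.
End HamiltonCut.

Lemma four_cycle_cut_not_hamiltonian (T : finType) (e : rel T) (A : {set T})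
    (x y a1 a2 z : T) :
  x \notin A -> y \notin A -> a1 \in A -> a2 \in A -> x != y -> a1 != a2 ->
  z \notin [set x; a1; y; a2] ->
  (forall a b, a \in A -> b \notin A -> e a b ->
     (a == a1) && (b == y) || (a == a2) && (b == x)) ->
  (forall a b, a \notin A -> b \in A -> e a b ->
     (a == x) && (b == a1) || (a == y) && (b == a2)) ->
  ~ hamiltonian e.
Proof.
move=> xA yA a1A a2A xy a12 zD e_leave e_enter /hamiltonian_successor [sig [arc cyc]].
exact: (cyclic_four_cycle_cut arc cyc xA yA a1A a2A xy a12 zD e_leave e_enter).
Qed.

Lemma strongly_2_connected_connect (V : finType) (h : rel V) :
  strongly_2_connected h -> forall u v, connect h u v.
Proof.
case=> V3 h2 u v; have [w] : exists w, w \notin [set u; v].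
  have : 0 < #|~: [set u; v]|.
    by rewrite cardsCs setCK cards2; move: V3; case: (u != v) => /=; lia.
  by case/card_gt0P => w; rewrite inE; exists w.
rewrite !inE negb_or => /andP [wu wv].
have uv : connect (avoid h w) u v by apply: h2; rewrite eq_sym.
by apply: connect_sub uv => a b /andP [hab _]; apply: connect1.
Qed.

Section Ports.
Variables (V : finType) (p q : V).

Definition ports : {set V} := [set p; q].

Definition ports_reachable (h : rel V) : Prop :=
  forall w u, u != w ->
    (exists2 z, z \in ports :\ w & connect (avoid h w) u z) /\
    (exists2 z, z \in ports :\ w & connect (avoid h w) z u).

Lemma mem_ports_tperm u : (tperm p q u \in ports) = (u \in ports).
Proof.
rewrite /ports !inE.
by case: tpermP => [->|->|/eqP/negbTE-> /eqP/negbTE->]; rewrite ?eqxx ?orbT.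
Qed.

Hypothesis pq : p != q.

Lemma tperm_ports_neq u : u \in ports -> tperm p q u != u.
Proof. by rewrite /ports !inE => /orP [] /eqP ->; rewrite ?tpermL ?tpermR // eq_sym. Qed.

Lemma exists_port_neq w : exists2 z, z \in ports & z != w.
Proof.
have : 0 < #|ports :\ w|.
  by move: (cardsD1 w ports); rewrite /ports cards2 pq; case: (_ \in _) => /=; lia.
by case/card_gt0P => z; rewrite in_setD1 => /andP [zw zP]; exists z.
Qed.

Lemma exists_nonport : 2 < #|V| -> exists c, c \notin ports.
Proof.
move=> V3; have : 0 < #|~: ports| by rewrite cardsCs setCK /ports cards2 pq; lia.
by case/card_gt0P => c; rewrite inE; exists c.
Qed.

Lemma strongly_2_connected_ports_reachable h :
  strongly_2_connected h -> ports_reachable h.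
Proof.
case=> _ h2 w u uw; have [z zP zw] := exists_port_neq w.
by split; exists z; rewrite ?in_setD1 ?zP ?zw //; apply: h2.
Qed.
End Ports.

Section Glue.
Variables (V : finType) (h : rel V) (p q : V).
Hypothesis pq : p != q.

(* [jump] is the successor map of the 4-cycle (false,p) -> (true,p) -> (false,q)
   -> (true,q) -> (false,p), extended to a bijection of [bool * V]. *)
Definition jump (s : bool * V) : bool * V :=
  (~~ s.1, if s.1 then tperm p q s.2 else s.2).

Definition jumpV (s : bool * V) : bool * V :=
  (~~ s.1, if s.1 then s.2 else tperm p q s.2).

Definition glue : rel (bool * V) :=
  [rel s t | (s.1 == t.1) && h s.2 t.2 || (s.2 \in ports p q) && (t == jump s)].

Lemma jumpK : cancel jump jumpV.
Proof. by case=> [[] u]; rewrite /jump /jumpV /= ?tpermK. Qed.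

Lemma jumpVK : cancel jumpV jump.
Proof. by case=> [[] u]; rewrite /jump /jumpV /= ?tpermK. Qed.

Lemma jump_jump s : jump (jump s) = (s.1, tperm p q s.2).
Proof. by case: s => [[] u]. Qed.

Lemma mem_ports_jumpV s : ((jumpV s).2 \in ports p q) = (s.2 \in ports p q).
Proof. by case: s => [[] u]; rewrite /= ?mem_ports_tperm. Qed.

Lemma glue_loopless : loopless h -> loopless glue.
Proof.
move=> hl [b u]; rewrite /glue /= eqxx (negbTE (hl u)) /=.
by apply/negP => /andP [_ /eqP /(congr1 fst)]; case: b.
Qed.

Lemma glue_oriented : oriented h -> oriented glue.
Proof.
case=> hl ho; split; first exact: glue_loopless.
move=> s t /orP [/andP [/eqP st hst] | /andP [sP /eqP ->]].
  rewrite /glue /= -st eqxx (negbTE (ho _ _ hst)) /=.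
  by apply/negP => /andP [_ /eqP /(congr1 fst)]; rewrite /= st; case: (t.1).
rewrite /glue /= jump_jump; apply/norP; split; first by case: (s.1).
case: s sP => b u /= uP.
by rewrite negb_and xpair_eqE eqxx /= eq_sym tperm_ports_neq ?orbT.
Qed.

Lemma card_copy (b : bool) (P : pred V) :
  #|[set t : bool * V | (t.1 == b) && P t.2]| = #|[set w | P w]|.
Proof.
have -> : [set t : bool * V | (t.1 == b) && P t.2] = pair b @: [set w | P w].
  apply/setP => -[c w]; rewrite !inE /=; apply/andP/imsetP => [[/eqP -> Pw] | [w']].
    by exists w; rewrite ?inE.
  by rewrite inE => Pw [-> ->].
by rewrite card_imset // => u w [].
Qed.

Lemma card_glue_nbhd (s t0 : bool * V) (P : pred V) : t0.1 = ~~ s.1 ->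
  #|[set t | (t.1 == s.1) && P t.2] :|: [set t | (s.2 \in ports p q) && (t == t0)]| =
  #|[set w | P w]| + (s.2 \in ports p q).
Proof.
move=> t0s; rewrite cardsU card_copy.
have -> : #|[set t | (s.2 \in ports p q) && (t == t0)]| = (s.2 \in ports p q).
  case: (s.2 \in ports p q) => /=; last by apply: eq_card0 => t; rewrite !inE.
  by rewrite -(cards1 t0); apply: eq_card => t; rewrite !inE.
suff -> : [set t | (t.1 == s.1) && P t.2] :&: [set t | (s.2 \in ports p q) && (t == t0)] = set0.
  by rewrite cards0 subn0.
apply/setP => t; rewrite !inE; have [-> | _] := eqVneq t t0; last by rewrite !andbF.
by rewrite t0s; case: (s.1).
Qed.

Variable k : nat.
Hypothesis h_out : forall u, #|[set w | h u w]| + (u \in ports p q) = k.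
Hypothesis h_in : forall u, #|[set w | h w u]| + (u \in ports p q) = k.

Lemma glue_regular : regular glue k.
Proof.
move=> s; split.
  have -> : [set t | glue s t] = [set t | (t.1 == s.1) && h s.2 t.2] :|:
                                 [set t | (s.2 \in ports p q) && (t == jump s)].
    by apply/setP => t; rewrite !inE /glue /= !inE eq_sym.
  by rewrite card_glue_nbhd ?h_out.
have -> : [set t | glue t s] = [set t | (t.1 == s.1) && h t.2 s.2] :|:
                               [set t | (s.2 \in ports p q) && (t == jumpV s)].
  apply/setP => t; rewrite !inE /glue /= !inE [s == _]eq_sym.
  rewrite (can2_eq jumpK jumpVK t s).
  have [-> | _] := eqVneq t (jumpV s); last by rewrite !andbF.
  by move: (mem_ports_jumpV s); rewrite /ports !inE => ->.
by rewrite (card_glue_nbhd (h^~ s.2)) ?h_in.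
Qed.

Hypothesis h_connected : forall u v, connect h u v.
Hypothesis h_ports : ports_reachable p q h.

Lemma glue_strongly_2_connected : strongly_2_connected glue.
Proof.
split.
  have : 1 < #|V| by apply/card_gt1P; exists p, q.
  by rewrite card_prod card_bool; lia.
move=> [b w] s t sw tw; set R := avoid glue (b, w); change (connect R s t).
have other_copy u v : connect R (~~ b, u) (~~ b, v).
  apply: (homo_connect (f := pair (~~ b))) (h_connected u v) => a c hac.
  by rewrite /R /avoid /glue /= eqxx hac !xpair_eqE; case: (b).
have same_copy u v : connect (avoid h w) u v -> connect R (b, u) (b, v).
  apply: homo_connect => a c /and3P [hac aw cw].
  by rewrite /R /avoid /glue /= eqxx hac !xpair_eqE eqxx aw cw.
suff hub s' : s' != (b, w) -> connect R s' (~~ b, p) /\ connect R (~~ b, p) s'.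
  by case: (hub s sw) (hub t tw) => [st _] [_ pt]; apply: connect_trans st pt.
case: s' => c u; have [-> _ | cb] := eqVneq c (~~ b); first by split; apply: other_copy.
have -> : c = b by move: cb; case: (b); case: (c).
rewrite xpair_eqE eqxx /= => uw.
have [[z zP uz] [z' z'P z'u]] := h_ports uw.
move: zP z'P; rewrite !in_setD1 => /andP [zw zP] /andP [z'w z'P].
have leave : R (b, z) (jump (b, z)).
  by rewrite /R /avoid /glue /= zP eqxx orbT !xpair_eqE eqxx zw; case: (b).
have enter : R (jumpV (b, z')) (b, z').
  rewrite /R /avoid /glue /= jumpVK eqxx (mem_ports_jumpV (b, z')) z'P orbT /=.
  by rewrite /jumpV !xpair_eqE eqxx z'w; case: (b).
split; first exact: connect_trans (same_copy _ _ uz)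
                     (connect_trans (connect1 leave) (other_copy _ p)).
exact: connect_trans (connect_trans (other_copy p _) (connect1 enter))
                     (same_copy _ _ z'u).
Qed.

Hypothesis V3 : 2 < #|V|.

Lemma glue_not_hamiltonian : ~ hamiltonian glue.
Proof.
have [c] := exists_nonport pq V3; rewrite /ports !inE negb_or => /andP [cp cq].
apply: (@four_cycle_cut_not_hamiltonian _ glue [set t | t.1]
          (false, p) (false, q) (true, p) (true, q) (true, c)); rewrite ?inE //.
- by rewrite !xpair_eqE /= (negbTE cp) (negbTE cq).
- move=> [[] u] [[] v]; rewrite !inE //= => _ _.
  rewrite /glue /ports /= !inE !xpair_eqE /= => /andP [uP /eqP ->].
  by case/orP: uP => /eqP ->; rewrite ?tpermL ?tpermR !eqxx ?orbT.
- move=> [[] u] [[] v]; rewrite !inE //= => _ _.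
  rewrite /glue /ports /= !inE !xpair_eqE /= => /andP [uP /eqP ->].
  by case/orP: uP => /eqP ->; rewrite !eqxx ?orbT.
Qed.
End Glue.

Section CompleteMinus.
Variables (V : finType) (p q : V).
Hypothesis pq : p != q.

Definition complete_minus : rel V :=
  [rel u v | (u != v) && ~~ ((u == p) && (v == q) || (u == q) && (v == p))].

Lemma complete_minus_sym u v : complete_minus u v = complete_minus v u.
Proof.
by rewrite /complete_minus /= [v == u]eq_sym [(v == p) && _]andbC [(v == q) && _]andbC orbC.
Qed.

Lemma complete_minus_loopless : loopless complete_minus.
Proof. by move=> u; rewrite /complete_minus /= eqxx. Qed.

Lemma complete_minus_nbhd u :
  [set w | complete_minus u w] =
  if u \in ports p q then [set~ u] :\ tperm p q u else [set~ u].
Proof.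
rewrite /ports !inE; apply/setP => w; rewrite /complete_minus !inE /=.
have [-> | up] := eqVneq u p.
  by rewrite tpermL (negbTE pq) /= !inE orbF andbC [p == w]eq_sym.
have [-> | uq] := eqVneq u q; last by rewrite /= !inE andbT [u == w]eq_sym.
by rewrite tpermR /= !inE andbC [q == w]eq_sym.
Qed.

Lemma complete_minus_out u : #|[set w | complete_minus u w]| + (u \in ports p q) = #|V|.-1.
Proof.
rewrite complete_minus_nbhd; case: ifP => uP; last by rewrite cardsC1 addn0.
have := cardsD1 (tperm p q u) [set~ u].
by rewrite cardsC1 !inE tperm_ports_neq // => ->; rewrite addnC.
Qed.

Lemma complete_minus_in u : #|[set w | complete_minus w u]| + (u \in ports p q) = #|V|.-1.
Proof.
rewrite -(complete_minus_out u); congr (_ + _).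
by apply: eq_card => w; rewrite !inE complete_minus_sym.
Qed.

Hypothesis V3 : 2 < #|V|.

Lemma complete_minus_connected u v : connect complete_minus u v.
Proof.
have [c] := exists_nonport pq V3; rewrite /ports !inE negb_or => /andP [cp cq].
have [-> | uv] := eqVneq u v; first exact: connect0.
have [/connect1 // | ] := boolP (complete_minus u v).
rewrite /complete_minus /= uv negbK => uvP.
have uc : complete_minus u c.
  rewrite /complete_minus /= (negbTE cp) (negbTE cq) !andbF orbF andbT.
  by case/orP: uvP => /andP [/eqP -> _]; rewrite eq_sym.
have cv : complete_minus c v.
  rewrite /complete_minus /= (negbTE cp) (negbTE cq) orbF andbT.
  by case/orP: uvP => /andP [_ /eqP ->].
exact: connect_trans (connect1 uc) (connect1 cv).
Qed.

Lemma complete_minus_ports_reachable : ports_reachable p q complete_minus.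
Proof.
move=> w u uw; have [uP | uP] := boolP (u \in ports p q).
  by split; exists u; rewrite ?connect0 // in_setD1 uw.
have [z zP zw] := exists_port_neq pq w.
have [uz zu] : complete_minus u z /\ complete_minus z u.
  move: uP zP; rewrite /ports !inE /complete_minus /= negb_or => /andP [up uq].
  by case/orP => /eqP ->;
    rewrite ?[p == u]eq_sym ?[q == u]eq_sym (negbTE up) (negbTE uq) /= ?andbF.
have zPw : z \in ports p q :\ w by rewrite in_setD1 zw zP.
by split; exists z => //; apply: connect1; rewrite /avoid /= ?uz ?zu uw zw.
Qed.
End CompleteMinus.

Lemma card_set_sum (T : finType) (S : {set T}) (P : pred T) :
  #|[set w in S | P w]| = \sum_(w in S) P w.
Proof.
rewrite -sum1_card (eq_bigl (fun w => (w \in S) && P w)) => [|w]; last by rewrite !inE.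
by rewrite big_mkcondr /=; apply: eq_bigr => w _; case: (P w).
Qed.

Section SemiDegree.
Variables (V : finType) (h : rel V).
Hypothesis h_oriented : oriented h.

Lemma oriented_inner_arcs (S : {set V}) :
  2 * \sum_(v in S) #|[set w in S | h v w]| <= #|S| * #|S|.-1.
Proof.
case: h_oriented => hl ho.
under eq_bigr do rewrite card_set_sum.
rewrite mul2n -addnn {2}exchange_big -big_split /= -sum_nat_const.
apply: leq_sum => v vS; rewrite -big_split /=.
have -> : #|S|.-1 = \sum_(w in S) (w != v).
  by rewrite -card_set_sum (cardsD1 v S) vS; apply: eq_card => w; rewrite !inE andbC.
apply: leq_sum => w _; have [-> | _] := eqVneq w v; first by rewrite (negbTE (hl v)).
by case hvw: (h v w); rewrite ?(negbTE (ho _ _ hvw)) //; case: (h w v).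
Qed.

Variables (p q : V) (k : nat).
Hypothesis h_out : forall u, k <= #|[set w | h u w]| + (u \in ports p q).

Lemma closed_set_dense (S W : {set V}) :
  (forall v w, v \in S -> h v w -> w \in S :|: W) ->
  2 * (k * #|S|) <= #|S| * #|S|.-1 + 2 * (#|S| * #|W|) + 4.
Proof.
move=> S_closed.
have out_bound v : v \in S -> #|[set w | h v w]| <= #|[set w in S | h v w]| + #|W|.
  move=> vS; apply: leq_trans (_ : _ <= #|[set w in S | h v w] :|: W|) _.
    apply: subset_leq_card; apply/subsetP => w; rewrite !inE => hvw.
    by move: (S_closed v w vS hvw); rewrite !inE hvw andbT.
  by rewrite cardsU leq_subr.
have ports_bound : \sum_(v in S) (v \in ports p q) <= 2.
  rewrite -card_set_sum; apply: leq_trans (subset_leq_card (_ : _ \subset ports p q)) _.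
    by apply/subsetP => v; rewrite inE => /andP [].
  by rewrite /ports cards2; case: (p != q).
have := oriented_inner_arcs S.
have : k * #|S| <= \sum_(v in S) (#|[set w in S | h v w]| + #|W|) + 2.
  rewrite mulnC -sum_nat_const.
  apply: (@leq_trans (\sum_(v in S) (#|[set w | h v w]| + (v \in ports p q)))).
    by apply: leq_sum => v _; exact: h_out.
  by rewrite big_split /= leq_add //; apply: leq_sum.
rewrite big_split /= sum_nat_const; lia.
Qed.
End SemiDegree.

Lemma dense_card_bound k s :
  3 < k -> 0 < s -> 2 * (k * s) <= s * s.-1 + 2 * s + 4 -> 2 * k - 1 <= s.
Proof. by move=> k3 s0 dense; nia. Qed.

Lemma semidegree_strongly_2_connected (V : finType) (h : rel V) (p q : V) k :
  oriented h -> 3 < k -> #|V| = 2 * k + 3 ->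
  (forall u, k <= #|[set w | h u w]| + (u \in ports p q)) ->
  (forall u, k <= #|[set w | h w u]| + (u \in ports p q)) ->
  strongly_2_connected h.
Proof.
move=> ho k3 cardV h_out h_in; split=> [|v x y xv yv]; first lia.
apply: contraT; set R := [rel a b | _] => nxy.
pose X := [set u | (u != v) && connect R x u].
pose Y := [set u | (u != v) && ~~ connect R x u].
have XY : #|X| + #|Y| = (2 * k + 3).-1.
  rewrite -cardV -(cardsC1 v) -(cardsID [set u | connect R x u] [set~ v]); congr (_ + _).
    by apply: eq_card => u; rewrite !inE andbC.
  by apply: eq_card => u; rewrite !inE andbC.
have X_closed u w : u \in X -> h u w -> w \in X :|: [set v].
  rewrite !inE => /andP [uv xu] huw; have [// | wv] := eqVneq w v; rewrite orbF /=.
  by apply: connect_trans xu (connect1 _); rewrite /= huw uv wv.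
have Y_closed u w : u \in Y -> [rel a b | h b a] u w -> w \in Y :|: [set v].
  rewrite !inE => /andP [uv nxu] hwu; have [// | wv] := eqVneq w v; rewrite orbF /=.
  by apply: contra nxu => xw; apply: connect_trans xw (connect1 _); rewrite /= hwu uv wv.
have ho' : oriented [rel a b | h b a].
  by case: ho => hl hr; split=> [u | u w /hr]; [apply: hl | ].
have X0 : 0 < #|X| by apply/card_gt0P; exists x; rewrite inE xv connect0.
have Y0 : 0 < #|Y| by apply/card_gt0P; exists y; rewrite inE yv nxy.
have := closed_set_dense ho h_out X_closed; rewrite cards1 muln1 => /(dense_card_bound k3 X0).
have := closed_set_dense ho' h_in Y_closed; rewrite cards1 muln1 => /(dense_card_bound k3 Y0).
lia.
Qed.

Lemma card_ord_count m (P : pred nat) : #|[set w : 'I_m | P w]| = count P (iota 0 m).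
Proof. by rewrite cardsE cardE size_filter -val_enum_ord count_map enumT. Qed.

Lemma count_iota_interval a b m : count (fun j => a <= j < b) (iota 0 m) = minn b m - a.
Proof.
suff shifted s : count (fun j => a <= j < b) (iota s m) = minn b (s + m) - maxn a s.
  by rewrite shifted add0n maxn0.
by elim: m s => [|m IH] s /=; [lia | rewrite IH; lia].
Qed.

Lemma count_iota_intervals m (P : pred nat) a b c d : b <= c ->
  (forall j, j < m -> P j = (a <= j < b) || (c <= j < d)) ->
  count P (iota 0 m) = (minn b m - a) + (minn d m - c).
Proof.
move=> bc Pj; rewrite -!count_iota_interval.
have := count_predUI (fun j => a <= j < b) (fun j => c <= j < d) (iota 0 m).
rewrite (@eq_count _ (predI _ _) pred0) ?count_pred0 ?addn0 => [<- | j /=]; last lia.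
by apply: eq_in_count => j; rewrite mem_iota add0n => /andP [_ /Pj].
Qed.

(* Arcs i -> i + d (mod 2n+1) for 0 < d < n, the second disjunct being the
   wrap-around case.  [oarc] deletes 2n -> 0, 0 -> 1 and n+2 -> 2n and adds
   n+2 -> 1, which lowers the semidegrees of the ports 0 and 2n to n-2 and keeps
   all others at n-1. *)
Definition circ_arc n i j := (i < j < i + n) || (j + (2 * n).+1 < i + n).

Definition oarc n i j :=
  circ_arc n i j && ~~ [|| (i == 2 * n) && (j == 0), (i == 0) && (j == 1)
                         | (i == n + 2) && (j == 2 * n)]
  || (i == n + 2) && (j == 1).

Definition ocirc n : rel 'I_(2 * n).+1 := [rel a b : 'I_(2 * n).+1 | oarc n a b].
Arguments ocirc : clear implicits.

Lemma ocirc_oriented n : oriented (ocirc n).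
Proof. by split=> [[i ?] | [i ?] [j ?]]; rewrite /ocirc /= /oarc /circ_arc; lia. Qed.

Section OCirc.
Variable n : nat.
Hypothesis n3 : 2 < n.

Lemma oarc_out_count i : i < (2 * n).+1 ->
  count (oarc n i) (iota 0 (2 * n).+1) + ((i == 0) || (i == 2 * n)) = n.-1.
Proof.
move=> ilt; have [-> | i0] := eqVneq i 0.
  rewrite (@count_iota_intervals _ _ 2 n n n); [lia | lia |].
  by rewrite /oarc /circ_arc; lia.
have [-> | i2n] := eqVneq i (2 * n).
  rewrite (@count_iota_intervals _ _ 1 n.-1 n.-1 n.-1); [lia | lia |].
  by rewrite /oarc /circ_arc; lia.
have [-> | in2] := eqVneq i (n + 2).
  rewrite (@count_iota_intervals _ _ 0 2 (n + 3) (2 * n)); [lia | lia |].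
  by rewrite /oarc /circ_arc; lia.
rewrite (@count_iota_intervals _ _ 0 (i + n - (2 * n).+1) i.+1 (i + n)); [lia | lia |].
by rewrite /oarc /circ_arc; lia.
Qed.

Lemma oarc_in_count j : j < (2 * n).+1 ->
  count (oarc n^~ j) (iota 0 (2 * n).+1) + ((j == 0) || (j == 2 * n)) = n.-1.
Proof.
move=> jlt; have [-> | j0] := eqVneq j 0.
  rewrite (@count_iota_intervals _ _ (n + 2) (2 * n) (2 * n) (2 * n)); [lia | lia |].
  by rewrite /oarc /circ_arc; lia.
have [-> | j1] := eqVneq j 1.
  rewrite (@count_iota_intervals _ _ (n + 2) (2 * n).+1 (2 * n).+1 (2 * n).+1); [lia | lia |].
  by rewrite /oarc /circ_arc; lia.
have [-> | j2n] := eqVneq j (2 * n).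
  rewrite (@count_iota_intervals _ _ (n + 1) (n + 2) (n + 3) (2 * n)); [lia | lia |].
  by rewrite /oarc /circ_arc; lia.
rewrite (@count_iota_intervals _ _ (j.+1 - n) j (j + n + 2) (2 * n).+1); [lia | lia |].
by rewrite /oarc /circ_arc; lia.
Qed.

Lemma ocirc_out u : #|[set w | ocirc n u w]| + (u \in ports ord0 ord_max) = n.-1.
Proof. by rewrite card_ord_count /ports !inE -!val_eqE; apply: oarc_out_count. Qed.

Lemma ocirc_in u : #|[set w | ocirc n w u]| + (u \in ports ord0 ord_max) = n.-1.
Proof.
by rewrite (card_ord_count _ (oarc n^~ u)) /ports !inE -!val_eqE; apply: oarc_in_count.
Qed.
End OCirc.

Lemma ocirc_strongly_2_connected n : 4 < n -> strongly_2_connected (ocirc n).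
Proof.
move=> n5; apply: (@semidegree_strongly_2_connected _ _ ord0 ord_max n.-1).
- exact: ocirc_oriented.
- lia.
- by rewrite card_ord; lia.
- by move=> u; rewrite ocirc_out //; lia.
- by move=> u; rewrite ocirc_in //; lia.
Qed.

Fixpoint reach (R : rel nat) (m k : nat) (S : seq nat) : seq nat :=
  if k is k'.+1 then reach R m k' (S ++ [seq j <- iota 0 m | has (R^~ j) S]) else S.

Lemma reach_connect m (R : rel nat) (u z : 'I_m) :
  val z \in reach R m m [:: val u] -> connect [rel a b : 'I_m | R a b] u z.
Proof.
pose Q j := exists2 z : 'I_m, val z = j & connect [rel a b : 'I_m | R a b] u z.
suff reachQ k S : {in S, forall j, Q j} -> {in reach R m k S, forall j, Q j}.
  move=> /reachQ [j | z' /val_inj -> //]; rewrite inE => /eqP ->; by exists u.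
elim: k S => [|k IH] S SQ //=; apply: IH => j; rewrite mem_cat => /orP [/SQ // |].
rewrite mem_filter mem_iota => /andP [/hasP [i /SQ [zi <- uzi] Rij] /andP [_ jm]].
by exists (Ordinal jm) => //; apply: connect_trans uzi (connect1 _).
Qed.

(* The counting argument fails for n <= 4 (for n = 3, deleting 2 leaves 0
   without out-arcs), so there the port conditions are checked by search. *)
Definition ocirc_check n : bool :=
  let m := (2 * n).+1 in
  let avoidn w := [rel i j | [&& oarc n i j, i != w & j != w]] in
  let ports_off w := [seq z <- [:: 0; 2 * n] | z != w] in
  all (fun u => all (fun v => v \in reach (oarc n) m m [:: u]) (iota 0 m)) (iota 0 m) &&
  all (fun w => all (fun u => (u != w) ==>
      has (fun z => z \in reach (avoidn w) m m [:: u]) (ports_off w) &&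
      has (fun z => u \in reach (avoidn w) m m [:: z]) (ports_off w)) (iota 0 m)) (iota 0 m).

Lemma ocirc_check_3_4 : ocirc_check 3 && ocirc_check 4.
Proof. by vm_compute. Qed.

Lemma ocirc_check_sound n : ocirc_check n ->
  (forall u v, connect (ocirc n) u v) /\ ports_reachable ord0 ord_max (ocirc n).
Proof.
have mem_iota_ord (i : 'I_(2 * n).+1) : val i \in iota 0 (2 * n).+1.
  by rewrite mem_iota ltn_ord.
case/andP=> /allP all_conn /allP all_ports; split=> [u v | w u uw].
  exact/reach_connect/(allP (all_conn _ (mem_iota_ord u)))/mem_iota_ord.
pose Rw := [rel i j | [&& oarc n i j, i != val w & j != val w]].
have avoidE : avoid (ocirc n) w =2 [rel a b : 'I_(2 * n).+1 | Rw a b].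
  by move=> a b; rewrite /= !val_eqE.
have port_ord z : z \in [seq z <- [:: 0; 2 * n] | z != val w] ->
    exists2 o, o \in ports ord0 ord_max :\ w & val o = z.
  rewrite mem_filter !inE => /andP [zw /orP [] /eqP zE]; subst z.
    by exists ord0; rewrite // in_setD1 /ports !inE eqxx andbT -val_eqE.
  by exists ord_max; rewrite // in_setD1 /ports !inE eqxx orbT andbT -val_eqE.
have /implyP/(_ uw)/andP [/hasP [z /port_ord [o oP <-] uo] /hasP [z' /port_ord [o' o'P <-] o'u]]
  := allP (all_ports _ (mem_iota_ord w)) _ (mem_iota_ord u).
by split; [exists o | exists o']; rewrite // (eq_connect avoidE); apply: (reach_connect (R := Rw)).
Qed.

Lemma ocirc_linked n : 2 < n ->
  (forall u v, connect (ocirc n) u v) /\ ports_reachable ord0 ord_max (ocirc n).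
Proof.
move=> n3; have [n4 | n5] := leqP n 4.
  apply: ocirc_check_sound; have : (n == 3) || (n == 4) by lia.
  by case/andP: ocirc_check_3_4 => ? ? /orP [] /eqP ->.
have n2c := ocirc_strongly_2_connected n5.
split; first exact: strongly_2_connected_connect.
by apply: strongly_2_connected_ports_reachable n2c; rewrite -val_eqE /=; lia.
Qed.

Lemma glue_complete_minus (V : finType) (p q : V) : p != q -> 2 < #|V| ->
  let e := glue (complete_minus p q) p q in
  [/\ loopless e, strongly_2_connected e, regular e #|V|.-1 & ~ hamiltonian e].
Proof.
move=> pq V3; split.
- exact/glue_loopless/complete_minus_loopless.
- apply: glue_strongly_2_connected => //; first exact: complete_minus_connected.
  exact: complete_minus_ports_reachable.
- by apply: glue_regular => u; [apply: complete_minus_out | apply: complete_minus_in].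
- exact: glue_not_hamiltonian.
Qed.

Lemma glue_ocirc n : 2 < n ->
  let e := glue (ocirc n) ord0 ord_max in
  [/\ oriented e, strongly_2_connected e, regular e n.-1 & ~ hamiltonian e].
Proof.
move=> n3; have pq : ord0 != ord_max :> 'I_(2 * n).+1 by rewrite -val_eqE /=; lia.
have [conn ports_reach] := ocirc_linked n3; split.
- by apply/glue_oriented/ocirc_oriented.
- exact: glue_strongly_2_connected.
- by apply: glue_regular => u; [apply: ocirc_out | apply: ocirc_in].
- by apply: glue_not_hamiltonian; rewrite // card_ord; lia.
Qed.

Lemma relabel_ord (T : finType) N (e : rel T) d : #|T| = N ->
  strongly_2_connected e -> regular e d -> ~ hamiltonian e ->
  exists e' : rel 'I_N, [/\ loopless e -> loopless e', oriented e -> oriented e',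
                           strongly_2_connected e', regular e' d & ~ hamiltonian e'].
Proof.
move=> /ord_bijection [f f_bij] es er eh; exists (relpre f e); split.
- exact: loopless_relpre.
- exact: oriented_relpre.
- exact: strongly_2_connected_relpre.
- exact: regular_relpre.
- by move/(hamiltonian_relpre f_bij).
Qed.

Theorem proposition1p6 :
  (forall n : nat, 3 <= n ->
     exists e : rel 'I_(2 * n),
       [/\ loopless e, strongly_2_connected e, regular e n.-1 & ~ hamiltonian e])
  /\
  (forall n : nat, 3 <= n ->
     exists e : rel 'I_(4 * n + 2),
       [/\ oriented e, strongly_2_connected e, regular e n.-1 & ~ hamiltonian e]).
Proof.
split=> n n3.
  have [p [q [_ _ pq]]] : exists p q : 'I_n, [/\ p \in 'I_n, q \in 'I_n & p != q].
    by apply/card_gt1P; rewrite card_ord; lia.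
  have V3 : 2 < #|'I_n| by rewrite card_ord.
  have [el es er eh] := glue_complete_minus pq V3.
  have card2n : #|{: bool * 'I_n}| = 2 * n by rewrite card_prod card_bool card_ord.
  have [e [el' _ es' er' eh']] := relabel_ord card2n es er eh.
  by exists e; split=> //; [exact: el' | rewrite -[n in n.-1](card_ord n)].
have [eo es er eh] := glue_ocirc n3.
have card4n : #|{: bool * 'I_(2 * n).+1}| = 4 * n + 2.
  by rewrite card_prod card_bool card_ord; lia.
have [e [_ eo' es' er' eh']] := relabel_ord card4n es er eh.
by exists e; split=> //; exact: eo'.
Qed.
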